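(* Let $\mathcal M$ be a finite metric space, let $C$ be any hierarchical clustering of $\mathcal M$, let the edges of a minimum spanning tree of $\mathcal M$ have weights $w_0\ge w_1\ge\cdots$ (all positive), and let $W=\sum_i w_i$. Then the sum over all clusters of $C$ of the minimum spanning tree length of the cluster is at least $\sum_i \tfrac12 w_i\bigl(1+\log_2(W/w_i)\bigr)$.
   Context: A hierarchical clustering of a finite point set $P$ is a family of nonempty subsets of $P$ (clusters) containing $P$ and all singletons, any two of which are disjoint or nested, maximal with this property (equivalently a rooted binary tree with leaves the points). The minimum spanning tree length of a cluster is the weight of a minimum spanning tree on its points under the metric. *)

From HB Require Import structures.
From mathcomp Require Import all_boot all_order all_algebra.
From mathcomp Require Import all_classical all_reals all_analysis.
Set Implicit Arguments. Unset Strict Implicit. Unset Printing Implicit Defensive.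
Import Order.TTheory GRing.Theory Num.Theory.
Local Open Scope ring_scope.


Section Defs.
Variable R : realType.

Definition is_metric (T : finType) (d : T -> T -> R) : Prop :=
  (forall x y, d x y = 0 <-> x = y) /\
  (forall x y, d x y = d y x) /\
  (forall x y z, d x z <= d x y + d y z).

Definition laminar (T : finType) (C : {set {set T}}) : Prop :=
  forall A B, A \in C -> B \in C ->
    [disjoint A & B]%B \/ A \subset B \/ B \subset A.

Definition laminar_nonempty (T : finType) (C : {set {set T}}) : Prop :=
  (forall A, A \in C -> A != @finset.set0 T) /\ laminar C.

Definition hierarchical_clustering (T : finType) (C : {set {set T}}) : Prop :=
  [set: T] \in C /\
  (forall x : T, [set x] \in C) /\
  laminar_nonempty C /\
  (forall C' : {set {set T}}, laminar_nonempty C' -> C \subset C' -> C' = C).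

(* spanning tree on the vertex set S: a set E of edges (stored as ordered
   pairs) between distinct points of S, with #|S| - 1 edges, connecting S.
   (Connected + #|S|-1 edges forces it to be a tree, each undirected edge
   appearing once.) *)
Definition spanning_tree (T : finType) (S : {set T}) (E : {set T * T}) : Prop :=
  (forall e, e \in E -> [/\ e.1 \in S, e.2 \in S & e.1 != e.2]) /\
  #|E| = (#|S| - 1)%N /\
  (forall x y, x \in S -> y \in S ->
     connect (fun u v => ((u, v) \in E) || ((v, u) \in E)) x y).

Definition tree_weight (T : finType) (d : T -> T -> R) (E : {set T * T}) : R :=
  \sum_(e in E) d e.1 e.2.

Definition is_mst (T : finType) (d : T -> T -> R) (S : {set T}) (E : {set T * T}) : Prop :=
  spanning_tree S E /\
  forall E', spanning_tree S E' -> tree_weight d E <= tree_weight d E'.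

Definition mst_len (T : finType) (d : T -> T -> R) (S : {set T}) : R :=
  inf [set w | exists E, spanning_tree S E /\ w = tree_weight d E]%classic.

Definition log2 (x : R) : R := ln x / ln 2.

End Defs.

(* A cluster A with at least two points is,
   by maximality of the clustering, the disjoint union of two child clusters
   A1 and A2; minimum spanning trees F1, F2 of the children together with one
   edge between them form a spanning tree G of A.  By the cut property, a
   minimum spanning tree F of A has, below every threshold t, at least as many
   edges as G, so some bijection s : G -> F never increases weights.  The bound
   Phi(F) = sum_e w_e/2 (1 + log2 (W/w_e)) ([entropy_bound]) is monotone in the
   weights and, by the grouping property of entropy, Phi of one edge plus two
   blocks is at most the total weight plus Phi of the blocks.  Hence
   Phi(F) <= w(F) + Phi(F1) + Phi(F2), and unfolding the recursion bounds Phi(F)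
   by the sum of the minimum spanning tree lengths of the clusters inside A. *)

From HB Require Import structures.
From mathcomp Require Import all_boot all_order all_algebra.
From mathcomp Require Import boolp reals exp.
From mathcomp Require Import zify ring lra.
Set Implicit Arguments. Unset Strict Implicit. Unset Printing Implicit Defensive.
Import Order.TTheory GRing.Theory Num.Theory.

Lemma setUDK (T : finType) (A B : {set T}) : A \subset B -> A :|: B :\: A = B.
Proof. by move=> sAB; rewrite -{1}(setIidPr sAB) setID. Qed.

(** * Connected components of edge sets *)

Section Components.
Variable T : finType.
Implicit Types (E H B : {set T * T}) (p q u v x y : T).

Definition edge_rel E : rel T := fun u v => ((u, v) \in E) || ((v, u) \in E).

Lemma edge_rel_sym E : symmetric (edge_rel E).
Proof. by move=> u v; rewrite /edge_rel orbC. Qed.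

Lemma connect_edge_sym E : connect_sym (edge_rel E).
Proof. exact/sym_connect_sym/edge_rel_sym. Qed.

Lemma connect_edge_sub E E' :
  E \subset E' -> subrel (connect (edge_rel E)) (connect (edge_rel E')).
Proof.
move=> sEE'; apply: connect_sub => u v /orP[] uv; apply: connect1;
  by rewrite /edge_rel (subsetP sEE' _ uv) ?orbT.
Qed.

Definition component E x := [set y | connect (edge_rel E) x y].

Definition ncomp E := #|component E @: [set: T]|.

Lemma component_id E x : x \in component E x.
Proof. by rewrite inE connect0. Qed.

Lemma connect_component E x y :
  connect (edge_rel E) x y -> component E x = component E y.
Proof.
move=> cxy; apply/setP=> z; rewrite !inE; apply/idP/idP; last exact: connect_trans.
by apply: connect_trans; rewrite connect_edge_sym.
Qed.

Lemma mem_component E x y : (y \in component E x) = (component E x == component E y).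
Proof.
apply/idP/eqP => [|->]; last exact: component_id.
by rewrite inE => /connect_component.
Qed.

Lemma leq_card_imset_coarsen (aT rT : finType) (f g : aT -> rT) :
  (forall a b, f a = f b -> g a = g b) -> #|g @: [set: aT]| <= #|f @: [set: aT]|.
Proof.
move=> fg; pose h c := if [pick a | f a == c] is Some a then g a else c.
suff -> : g @: [set: aT] = h @: (f @: [set: aT]) by apply: leq_imset_card.
rewrite -imset_comp; apply: eq_imset => a /=; rewrite /h.
by case: pickP => [b /eqP/fg //|/(_ a)]; rewrite eqxx.
Qed.

Lemma ncomp_coarsen E E' :
  subrel (connect (edge_rel E)) (connect (edge_rel E')) -> ncomp E' <= ncomp E.
Proof.
move=> sub; apply: leq_card_imset_coarsen => x y exy; apply/connect_component/sub.
by have := component_id E y; rewrite -exy inE.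
Qed.

Lemma component_set0 x : component set0 x = [set x].
Proof.
apply/setP=> y; rewrite !inE; apply/idP/eqP => [/connectP[[|z p] /=] //|->].
  by rewrite /edge_rel !inE.
exact: connect0.
Qed.

Lemma ncomp_set0 : ncomp set0 = #|T|.
Proof.
rewrite /ncomp (eq_imset _ component_set0) card_imset ?cardsT //; exact: set1_inj.
Qed.


Lemma edge_relU1 u v E p q :
  edge_rel ((u, v) |: E) p q =
  [|| (p == u) && (q == v), (q == u) && (p == v) | edge_rel E p q].
Proof. by rewrite /edge_rel !inE !xpair_eqE -!orbA; congr (_ || _); apply: orbCA. Qed.

Lemma closed_component E x : closed (edge_rel E) (component E x).
Proof. by move=> p q /connect1 pq; rewrite !mem_component (connect_component pq). Qed.

Lemma component_setU1 u v E x :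
  component ((u, v) |: E) x =
  if x \in component E u :|: component E v then component E u :|: component E v
  else component E x.
Proof.
set E' := (u, v) |: E; set U := component E u :|: component E v.
have closedE' (a : {set T}) :
    closed (edge_rel E) a -> (u \in a) = (v \in a) -> closed (edge_rel E') a.
  move=> clE uv p q; rewrite edge_relU1.
  by case/or3P=> [/andP[/eqP-> /eqP->]|/andP[/eqP-> /eqP->]|/clE].
have sE := connect_edge_sub (subsetUr [set (u, v)] E).
have toU z : z \in U -> connect (edge_rel E') z u.
  rewrite !inE => /orP[zu|zv]; first by rewrite connect_edge_sym; apply: sE.
  apply: connect_trans (_ : connect _ z v) _.
    by rewrite connect_edge_sym; apply: sE.
  by apply: connect1; rewrite edge_relU1 !eqxx orbT.
apply/setP => y; rewrite inE; case: ifP => xU; apply/idP/idP.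
- move=> cxy; have clU : closed (edge_rel E') U.
    apply: closedE'; last by rewrite !inE !connect0 orbT.
    by move=> p q pq; rewrite !in_setU (closed_component u pq) (closed_component v pq).
  by rewrite -(closed_connect clU cxy).
- move=> yU; apply: connect_trans (toU x xU) _.
  by rewrite connect_edge_sym; apply: toU.
- move=> cxy; have clx : closed (edge_rel E') (component E x).
    apply: closedE'; first exact: closed_component.
    move: xU; rewrite !in_setU !mem_component !(eq_sym (component E x)).
    by case/norP=> /negbTE-> /negbTE->.
  by rewrite -(closed_connect clx cxy) component_id.
- by rewrite inE => /sE.
Qed.

Section OneEdge.
Variables (u v : T) (E : {set T * T}).
Let cu := component E u.
Let cv := component E v.
Let comps := component E @: [set: T].
Let merge (c : {set T}) := if (c == cu) || (c == cv) then cu :|: cv else c.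

Let ncomp_setU1E : ncomp ((u, v) |: E) = #|merge @: comps|.
Proof.
rewrite /ncomp /comps -imset_comp (@eq_imset _ _ _ (merge \o component E)) // => x /=.
by rewrite component_setU1 /merge !in_setU !mem_component !(eq_sym (component E x)).
Qed.

Let cu_comps : cu \in comps. Proof. exact: imset_f. Qed.
Let cv_comps : cv \in comps. Proof. exact: imset_f. Qed.

Lemma ncomp_setU1_ge : ncomp E <= (ncomp ((u, v) |: E)).+1.
Proof.
have merge_inj : {in comps :\ cu &, injective merge}.
  have neqU c : c \in comps -> c != cu -> c != cu :|: cv.
    case/imsetP=> z _ -> ne; apply: contra_neq ne => eqU.
    by apply/eqP; rewrite -mem_component eqU in_setU component_id.
  move=> c1 c2; rewrite !inE /merge => /andP[c1u c1C] /andP[c2u c2C].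
  rewrite (negbTE c1u) (negbTE c2u) /=.
  case: eqP => [->|_]; case: eqP => [->|_] // eqc.
  - by move: (neqU c2 c2C c2u); rewrite -eqc eqxx.
  - by move: (neqU c1 c1C c1u); rewrite eqc eqxx.
rewrite ncomp_setU1E /ncomp -/comps (cardsD1 cu) cu_comps -(card_in_imset merge_inj).
by rewrite add1n ltnS; apply/subset_leq_card/imsetS/subsetDl.
Qed.

Lemma ncomp_setU1_lt : ~~ connect (edge_rel E) u v -> ncomp ((u, v) |: E) < ncomp E.
Proof.
move=> nuv; have neq : cu != cv.
  by apply: contra nuv; rewrite -mem_component inE.
rewrite ncomp_setU1E /ncomp -/comps (cardsD1 cu comps) cu_comps add1n ltnS.
suff -> : merge @: comps = merge @: (comps :\ cu) by apply: leq_imset_card.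
apply/eqP; rewrite eqEsubset [X in _ && X]imsetS ?subsetDl // andbT.
apply/subsetP => _ /imsetP[c cC ->]; case: (eqVneq c cu) => [->|ne].
  have -> : merge cu = merge cv by rewrite /merge !eqxx orbT.
  by apply: imset_f; rewrite !inE cv_comps andbT eq_sym.
by apply: imset_f; rewrite !inE ne.
Qed.
End OneEdge.


Lemma ncomp_setU E B : ncomp E <= ncomp (E :|: B) + #|B|.
Proof.
move cardB : #|B| => n; elim: n B cardB => [|n IH] B cardB.
  by move/eqP: cardB; rewrite cards_eq0 => /eqP->; rewrite setU0 addn0.
have [[u v] uvB] : exists e, e \in B by apply/set0Pn; rewrite -card_gt0 cardB.
have cardB' : #|B :\ (u, v)| = n by move: cardB; rewrite (cardsD1 (u, v)) uvB => -[].
have := ncomp_setU1_ge u v (E :|: B :\ (u, v)).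
rewrite setUCA setD1K // => ge.
by move/(_ _ cardB')/leq_trans: IH; apply; rewrite addnS -addSn leq_add2r.
Qed.

Lemma card_le_ncomp E : #|T| <= ncomp E + #|E|.
Proof. by have := ncomp_setU set0 E; rewrite set0U ncomp_set0. Qed.

Lemma ncomp_bridges H B :
  (forall f, f \in B -> ~~ connect (edge_rel (H :|: B :\ f)) f.1 f.2) ->
  ncomp (H :|: B) + #|B| <= ncomp H.
Proof.
move cardB : #|B| => n; elim: n B cardB => [|n IH] B cardB bridges.
  by move/eqP: cardB; rewrite cards_eq0 => /eqP->; rewrite setU0 addn0.
have [[u v] uvB] : exists e, e \in B by apply/set0Pn; rewrite -card_gt0 cardB.
have cardB' : #|B :\ (u, v)| = n by move: cardB; rewrite (cardsD1 (u, v)) uvB => -[].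
have := ncomp_setU1_lt (bridges _ uvB); rewrite setUCA setD1K // => lt.
apply: leq_trans (IH _ cardB' _); first by rewrite addnS ltn_add2r.
move=> f; rewrite inE => /andP[_ fB]; apply: contra (bridges f fB).
by apply/connect_edge_sub/setUS/subsetP => e; rewrite !inE => /and3P[-> _ ->].
Qed.

End Components.

(** * Spanning trees *)

Section SpanningTree.
Variable T : finType.
Implicit Types (A : {set T}) (E F H : {set T * T}).

Lemma ncomp_sub_spanning_tree A F E :
  spanning_tree A F -> A != set0 -> E \subset F -> ncomp E + #|E| <= #|T|.
Proof.
case=> _ [cardF connF] /set0Pn[a aA] sEF.
have ncompF : ncomp F <= 1 + #|~: A|.
  rewrite /ncomp -(setUCr A) imsetU; apply: leq_trans (leq_card_setU _ _) _.
  apply: leq_add; last exact: leq_imset_card.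
  rewrite -(cards1 (component F a)); apply/subset_leq_card/subsetP => _ /imsetP[x xA ->].
  by rewrite inE (connect_component (connF x a xA aA)).
have := ncomp_setU E (F :\: E); rewrite setUDK // cardsDS //.
have := cardsC A; have : 0 < #|A| by rewrite card_gt0; apply/set0Pn; exists a.
have := subset_leq_card sEF; lia.
Qed.

Lemma fundamental_cycle_leaves A F H u v :
  spanning_tree A F -> u \in A -> v \in A -> H \subset F ->
  ~~ connect (edge_rel H) u v ->
  exists2 f, f \in F :\: H & connect (edge_rel ((u, v) |: F :\ f)) f.1 f.2.
Proof.
move=> treeF uA vA sHF nuv.
have [/exists_inP[f fB cf]|/exists_inPn bridges] :=
  boolP [exists f in F :\: H, connect (edge_rel ((u, v) |: F :\ f)) f.1 f.2].
  by exists f.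
(* Otherwise each edge of F outside H is a bridge of (u, v) |: F, and counting
   components shows that H would have more than #|T| - #|H| of them. *)
exfalso; have [_ [_ connF]] := treeF.
have fewer : ncomp ((u, v) |: H :|: F :\: H) + #|F :\: H| <= ncomp ((u, v) |: H).
  apply: ncomp_bridges => f fB.
  suff -> : (u, v) |: H :|: F :\: H :\ f = (u, v) |: F :\ f by apply: bridges.
  move: fB; rewrite inE => /andP[fH _]; apply/setP => e; rewrite !inE.
  case: (eqVneq e f) => [->|_] /=; first by rewrite (negbTE fH) !orbF.
  by have [eH|eH] := boolP (e \in H); rewrite ?(subsetP sHF _ eH) ?orbT ?orbF.
rewrite -setUA setUDK // in fewer.
have coarse : ncomp F <= ncomp ((u, v) |: F).
  apply: ncomp_coarsen; apply: connect_sub => p q; rewrite edge_relU1.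
  case/or3P=> [/andP[/eqP-> /eqP->]|/andP[/eqP-> /eqP->]|/connect1 //]; exact: connF.
have := ncomp_setU1_lt nuv; have := card_le_ncomp F.
have A0 : A != set0 by apply/set0Pn; exists u.
have := ncomp_sub_spanning_tree treeF A0 sHF.
have := subset_leq_card sHF; move: fewer; rewrite cardsDS //; lia.
Qed.

Lemma spanning_tree_exchange A F u v f :
  spanning_tree A F -> u \in A -> v \in A -> u != v -> (u, v) \notin F ->
  f \in F -> connect (edge_rel ((u, v) |: F :\ f)) f.1 f.2 ->
  spanning_tree A ((u, v) |: F :\ f).
Proof.
move=> [edgesF [cardF connF]] uA vA uv uvF fF cf; split; [|split].
- by move=> e; rewrite !inE => /orP[/eqP->|/andP[_ /edgesF //]].
- by rewrite -cardF (cardsD1 f F) fF cardsU1 !inE (negbTE uvF) andbF.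
- have edgeF e : e \in F -> connect (edge_rel ((u, v) |: F :\ f)) e.1 e.2.
    move=> eF; have [-> //|ef] := eqVneq e f; apply: connect1.
    by rewrite /edge_rel -surjective_pairing !inE ef eF orbT.
  move=> x y xA yA; apply: connect_sub (connF x y xA yA) => p q /orP[/edgeF //|/edgeF].
  by rewrite connect_edge_sym.
Qed.

Lemma spanning_tree_star A a : a \in A -> spanning_tree A [set (a, x) | x in A :\ a].
Proof.
move=> aA; split; [|split].
- by move=> e /imsetP[x]; rewrite !inE => /andP[xa xA] -> /=; rewrite eq_sym.
- rewrite card_imset; last by move=> x y [].
  by rewrite (cardsD1 a A) aA add1n subn1.
- have toa z : z \in A -> connect (edge_rel [set (a, x) | x in A :\ a]) z a.
    move=> zA; case: (eqVneq z a) => [->|za]; first exact: connect0.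
    by apply: connect1; rewrite /edge_rel imset_f ?orbT // !inE za.
  move=> x y xA yA; apply: connect_trans (toa x xA) _.
  by rewrite connect_edge_sym; exact: toa.
Qed.

Section Link.
Variables (A1 A2 : {set T}) (F1 F2 : {set T * T}) (a1 a2 : T).
Hypotheses (tree1 : spanning_tree A1 F1) (tree2 : spanning_tree A2 F2).
Hypotheses (disA : [disjoint A1 & A2]) (a1A1 : a1 \in A1) (a2A2 : a2 \in A2).

Lemma disjoint_spanning_trees : [disjoint F1 & F2].
Proof.
rewrite disjoint_subset; apply/subsetP => e /(proj1 tree1)[e1 _ _].
by rewrite inE; apply/negP => /(proj1 tree2)[e2 _ _]; rewrite (disjointFr disA e1) in e2.
Qed.

Lemma link_edge_notin : (a1, a2) \notin F1 :|: F2.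
Proof.
rewrite in_setU negb_or; apply/andP; split; apply/negP.
  by case/(proj1 tree1) => _ /= a2A1 _; move: (disjointFr disA a2A1); rewrite a2A2.
by case/(proj1 tree2) => /= a1A2 _ _; move: (disjointFr disA a1A1); rewrite a1A2.
Qed.

Lemma spanning_tree_link : spanning_tree (A1 :|: A2) ((a1, a2) |: (F1 :|: F2)).
Proof.
have [edges1 [card1 conn1]] := tree1; have [edges2 [card2 conn2]] := tree2.
split; [|split].
- move=> e; rewrite !inE => /or3P[/eqP-> /=|/edges1[-> -> ->]|/edges2[-> -> ->]];
    rewrite ?orbT //.
  rewrite a1A1 a2A2 orbT; split=> //; apply: contraTneq a2A2 => <-.
  by rewrite (disjointFr disA a1A1).
- rewrite cardsU1 link_edge_notin !cardsU (disjoint_setI0 disjoint_spanning_trees).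
  rewrite (disjoint_setI0 disA) !cards0 !subn0 card1 card2.
  have : 0 < #|A1| by apply/card_gt0P; exists a1.
  have : 0 < #|A2| by apply/card_gt0P; exists a2.
  lia.
- have toa z : z \in A1 :|: A2 -> connect (edge_rel ((a1, a2) |: (F1 :|: F2))) z a1.
    rewrite in_setU => /orP[zA1|zA2].
      by apply: connect_edge_sub (conn1 z a1 zA1 a1A1); rewrite setUCA subsetUl.
    apply: connect_trans (_ : connect _ z a2) _.
      by apply: connect_edge_sub (conn2 z a2 zA2 a2A2); rewrite setUA subsetUr.
    by apply: connect1; rewrite /edge_rel !inE eqxx orbT.
  move=> x y xA yA; apply: connect_trans (toa x xA) _.
  by rewrite connect_edge_sym; exact: toa.
Qed.

End Link.

End SpanningTree.

(** * Matching two sets by their sublevel counts *)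

Section Matching.
Variables (disp : Order.disp_t) (R : orderType disp) (K : finType) (w : K -> R).
Local Open Scope order_scope.
Implicit Types (S G F : {set K}) (t : R).

Definition sublevel S t := [set x in S | w x <= t].

Lemma sublevel_sub S t : sublevel S t \subset S.
Proof. by apply/subsetP => x; rewrite inE => /andP[]. Qed.

Lemma exists_argmax S : S != set0 -> exists2 x, x \in S & forall y, y \in S -> w y <= w x.
Proof.
case/set0Pn => x0 x0S; case: (arg_maxP w x0S) => x xS xmax.
by exists x => // y /xmax.
Qed.

Section Step.
Variables (G F : {set K}) (g f : K).
Hypotheses (gG : g \in G) (gmax : forall x, x \in G -> w x <= w g).
Hypotheses (fF : f \in F) (fmax : forall x, x \in F -> w x <= w f).
Hypotheses (cardGF : #|G| = #|F|) (dom : forall t, #|sublevel G t| <= #|sublevel F t|).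

Let sublevel_full S t : (forall y, y \in S -> w y <= t) -> sublevel S t = S.
Proof. by move=> St; apply/setP => y; rewrite inE andb_idr // => /St. Qed.

Lemma dominated_max_le : w f <= w g.
Proof.
rewrite leNgt; apply/negP => gf.
have : sublevel F (w g) \subset F :\ f.
  apply/subsetP => x; rewrite !inE => /andP[xF xg]; rewrite xF andbT.
  by apply: contraTneq xg => ->; rewrite -ltNge.
move/subset_leq_card; have := dom (w g).
rewrite (sublevel_full (S := G) (t := w g) gmax).
have := cardsD1 f F; rewrite fF; lia.
Qed.

Lemma dominated_setD1 t : #|sublevel (G :\ g) t| <= #|sublevel (F :\ f) t|.
Proof.
have [ft|tf] := leP (w f) t.
  rewrite (sublevel_full (S := F :\ f) (t := t)); last first.
    by move=> y /setD1P[_ /fmax/le_trans]; apply.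
  have -> : #|F :\ f| = #|G :\ g|.
    by move: cardGF; rewrite (cardsD1 g G) (cardsD1 f F) gG fF => -[].
  exact/subset_leq_card/sublevel_sub.
apply: leq_trans (leq_trans (dom t) _); apply/subset_leq_card/subsetP => x; rewrite !inE.
  by case/andP=> /andP[_ ->] ->.
case/andP=> -> xt; rewrite xt !andbT; apply: contraTneq xt => ->.
by rewrite -ltNge.
Qed.

End Step.

Lemma sublevel_matching G F :
  #|G| = #|F| -> (forall t, #|sublevel G t| <= #|sublevel F t|) ->
  exists2 s : K -> K, {in G &, injective s} &
    {in G, forall x, s x \in F /\ w (s x) <= w x}.
Proof.
move cardG : #|G| => n; elim: n G F cardG => [|n IH] G F cardG cardF dom.
  by move/eqP: cardG; rewrite cards_eq0 => /eqP->; exists id => [x y|x]; rewrite inE.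
have [g gG gmax] : exists2 g, g \in G & forall x, x \in G -> w x <= w g.
  by apply: exists_argmax; rewrite -card_gt0 cardG.
have [f fF fmax] : exists2 f, f \in F & forall x, x \in F -> w x <= w f.
  by apply: exists_argmax; rewrite -card_gt0 -cardF.
have cardGF : #|G| = #|F| by rewrite cardG.
have cardG' : #|G :\ g| = n by move: cardG; rewrite (cardsD1 g G) gG => -[].
have cardF' : n = #|F :\ f| by move: cardF; rewrite (cardsD1 f F) fF => -[].
have [s sinj sF] : exists2 s : K -> K, {in G :\ g &, injective s} &
    {in G :\ g, forall x, s x \in F :\ f /\ w (s x) <= w x}.
  by apply: IH => // t; apply: dominated_setD1.
have sFf x : x \in G -> x != g -> s x \in F :\ f.
  by move=> xG xg; case: (sF x); rewrite ?inE ?xg.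
exists (fun x => if x == g then f else s x) => [x y xG yG /=|x xG /=].
  case: (eqVneq x g) => [->|xg]; case: (eqVneq y g) => [->|yg] //.
  - by move=> fsy; move: (sFf y yG yg); rewrite -fsy !inE eqxx.
  - by move=> sxf; move: (sFf x xG xg); rewrite sxf !inE eqxx.
  - by apply: sinj; apply/setD1P; split.
case: (eqVneq x g) => [->|xg].
  by split; last exact: dominated_max_le gG gmax fF cardGF dom.
by have [/setD1P[_ ->]] := sF x (introT setD1P (conj xg xG)).
Qed.

End Matching.

(** * Hierarchical clusterings *)

Section Clustering.
Variables (T : finType) (C : {set {set T}}).
Hypothesis hC : hierarchical_clustering C.
Implicit Types (A B : {set T}) (x y : T).

Lemma cluster_neq0 A : A \in C -> A != set0.
Proof. by case: hC => _ [_ [[neq0 _] _]]; apply: neq0. Qed.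

Lemma cluster_laminar A B :
  A \in C -> B \in C -> [disjoint A & B] \/ A \subset B \/ B \subset A.
Proof. by case: hC => _ [_ [[_ lam] _]]; apply: lam. Qed.

Lemma mem_cluster_of_laminar A :
  A != set0 -> (forall B, B \in C -> [disjoint B & A] \/ B \subset A \/ A \subset B) ->
  A \in C.
Proof.
move=> A0 lamA; case: hC => _ [_ [[neq0 lam] maxC]].
suff <- : A |: C = C by rewrite setU11.
apply: maxC; last exact: subsetUr.
split=> [B|B B']; first by rewrite in_setU1 => /predU1P[->|/neq0].
rewrite !in_setU1 => /predU1P[->|BC] /predU1P[->|B'C]; first by right; left.
- by case: (lamA B' B'C) => [|[|]]; [left; rewrite disjoint_sym|right; right|right; left].
- exact: lamA.
- exact: lam.
Qed.

Section MaximalSubcluster.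
Variables (A A1 : {set T}) (x : T).
Hypotheses (A1C : A1 \in C) (xA1 : x \in A1).
Hypothesis A1max : forall B, B \in C -> x \in B -> B \proper A -> B \subset A1.

Lemma proper_subcluster_sub_or_disjoint B :
  B \in C -> B \proper A -> B \subset A1 \/ [disjoint B & A1].
Proof.
move=> BC BA; case: (cluster_laminar BC A1C) => [|[|A1B]]; [by right|by left|left].
by apply: A1max => //; apply: (subsetP A1B).
Qed.

End MaximalSubcluster.

Lemma exists_maximal_subcluster A x :
  A \in C -> x \in A -> 1 < #|A| ->
  exists A1, [/\ A1 \in C, x \in A1, A1 \proper A &
    forall B, B \in C -> x \in B -> B \proper A -> B \subset A1].
Proof.
move=> AC xA A_gt1; pose P B := [&& B \in C, x \in B & B \proper A].
have Px : P [set x].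
  by rewrite /P set11 properEcard sub1set xA cards1 A_gt1 andbT; case: hC => _ [->].
case: (arg_maxnP (fun B => #|B|) Px) => A1 /and3P[A1C xA1 A1A] A1max.
exists A1; split=> // B BC xB BA.
have le : #|B| <= #|A1| by apply: A1max; rewrite /P BC xB BA.
case: (cluster_laminar BC A1C) => [|[//|A1B]].
  by move/disjointFr/(_ xB); rewrite xA1.
by have /eqP-> : A1 == B by rewrite eqEcard A1B le.
Qed.

Lemma cluster_split A :
  A \in C -> 1 < #|A| ->
  exists A1 A2, [/\ A1 \in C, A2 \in C, [disjoint A1 & A2] & A1 :|: A2 = A].
Proof.
move=> AC A_gt1; have [x xA] : exists x, x \in A by apply/card_gt0P; apply: ltnW.
have [A1 [A1C xA1 A1A A1max]] := exists_maximal_subcluster AC xA A_gt1.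
have [_ [y yA yA1]] := properP A1A.
have [A2 [A2C yA2 A2A A2max]] := exists_maximal_subcluster AC yA A_gt1.
have disA : [disjoint A1 & A2].
  case: (proper_subcluster_sub_or_disjoint A1C xA1 A1max A2C A2A).
    by move/subsetP/(_ y yA2); rewrite (negbTE yA1).
  by rewrite disjoint_sym.
(* A proper union A1 :|: A2 would be laminar with C, hence a cluster by the
   maximality of C, contradicting the maximality of A1. *)
exists A1, A2; split=> //; apply/eqP; apply: contraT => UA.
have UA' : A1 :|: A2 \proper A.
  by rewrite properEneq UA subUset (proper_sub A1A) (proper_sub A2A).
have UC : A1 :|: A2 \in C.
  apply: mem_cluster_of_laminar => [|B BC].
    by apply/set0Pn; exists x; rewrite inE xA1.
  case: (cluster_laminar BC AC) => [BA|[BA|AB]].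
  - by left; apply: disjointWr BA; rewrite subUset (proper_sub A1A) (proper_sub A2A).
  - have [->|BnA] := eqVneq B A; first by right; right; exact: proper_sub UA'.
    have BA' : B \proper A by rewrite properEneq BnA.
    case: (proper_subcluster_sub_or_disjoint A1C xA1 A1max BC BA') => [B1|dB1].
      by right; left; apply: subset_trans B1 (subsetUl _ _).
    case: (proper_subcluster_sub_or_disjoint A2C yA2 A2max BC BA') => [B2|dB2].
      by right; left; apply: subset_trans B2 (subsetUr _ _).
    by left; rewrite disjoints_subset setCU subsetI -!disjoints_subset dB1 dB2.
  - by right; right; apply: subset_trans (proper_sub UA') AB.
have /subsetP/(_ y) := A1max _ UC (subsetP (subsetUl A1 A2) x xA1) UA'.
by rewrite in_setU yA2 orbT (negbTE yA1) => /(_ isT).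
Qed.

End Clustering.

(** * Minimum spanning trees *)

Section MinimumSpanningTree.
Variables (R : realType) (T : finType) (d : T -> T -> R).
Local Open Scope ring_scope.
Local Notation dw := (fun e : T * T => d e.1 e.2).
Implicit Types (A : {set T}) (E F G : {set T * T}).

Lemma mst_cut A F u v t :
  is_mst d A F -> u \in A -> v \in A -> d u v <= t ->
  connect (edge_rel (sublevel dw F t)) u v.
Proof.
move=> [treeF minF] uA vA uvt; have [->|uv] := eqVneq u v; first exact: connect0.
apply: contraT => nuv.
(* The cycle closed by (u, v) leaves the sublevel forest through an edge f
   heavier than t; exchanging f for (u, v) would make F lighter. *)
have uvF : (u, v) \notin F.
  by apply: contra nuv => uvF; apply: connect1; rewrite /edge_rel inE uvF uvt.
have [f] := fundamental_cycle_leaves treeF uA vA (sublevel_sub _ _ _) nuv.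
rewrite !inE => /andP[ft fF] cf; rewrite fF /= -ltNge in ft.
have := minF _ (spanning_tree_exchange treeF uA vA uv uvF fF cf).
rewrite /tree_weight (big_setD1 f fF) big_setU1 /=; last by rewrite !inE (negbTE uvF) andbF.
by rewrite lerD2r => /le_trans/(_ uvt); rewrite leNgt ft.
Qed.

Lemma mst_sublevel_card A F G t :
  is_mst d A F -> spanning_tree A G ->
  (#|sublevel dw G t| <= #|sublevel dw F t|)%N.
Proof.
move=> mstF treeG; have [A0|A0] := eqVneq A set0.
  suff -> : sublevel dw G t = set0 by rewrite cards0.
  apply/setP => e; rewrite !inE; apply/andP => -[/(proj1 treeG)[]].
  by rewrite A0 inE.
(* Both are forests, and by the cut property the components of the one in F
   are unions of components of the one in G. *)
have coarse : (ncomp (sublevel dw F t) <= ncomp (sublevel dw G t))%N.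
  apply/ncomp_coarsen/connect_sub => p q.
  have cut e : e \in sublevel dw G t -> connect (edge_rel (sublevel dw F t)) e.1 e.2.
    by rewrite inE => /andP[/(proj1 treeG)[e1A e2A _] et]; apply: mst_cut mstF e1A e2A et.
  by case/orP=> /cut //; rewrite connect_edge_sym.
have := ncomp_sub_spanning_tree treeG A0 (sublevel_sub dw G t).
have := card_le_ncomp (sublevel dw F t) => leF leG.
rewrite -(leq_add2l (ncomp (sublevel dw F t))); apply: leq_trans leF.
by apply: leq_trans leG; rewrite leq_add2r.
Qed.

Lemma mst_matching A F G :
  is_mst d A F -> spanning_tree A G ->
  exists s : T * T -> T * T, [/\ {in G &, injective s}, s @: G = F &
    {in G, forall e, d (s e).1 (s e).2 <= d e.1 e.2}].
Proof.
move=> mstF treeG.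
have cardGF : #|G| = #|F| by rewrite (proj1 (proj2 treeG)) (proj1 (proj2 (proj1 mstF))).
have [s s_inj sF] := sublevel_matching cardGF (fun t => mst_sublevel_card t mstF treeG).
exists s; split=> // [|e /sF[] //]; apply/eqP; rewrite eqEcard card_in_imset // cardGF leqnn.
by rewrite andbT; apply/subsetP => _ /imsetP[e /sF[sF' _] ->].
Qed.

Lemma mst_exists A : A != set0 -> exists F, is_mst d A F.
Proof.
case/set0Pn => a aA; pose P E := `[< spanning_tree A E >].
have Pstar : P [set (a, x) | x in A :\ a] by apply/asboolP/spanning_tree_star.
case: (arg_minP (tree_weight d) Pstar) => F /asboolP treeF Fmin.
by exists F; split=> // E /asboolP/Fmin.
Qed.

Lemma mst_lenE A F : is_mst d A F -> mst_len d A = tree_weight d F.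
Proof.
move=> [treeF minF]; apply/eqP; rewrite eq_le; apply/andP; split.
  by apply: ge_inf; [exists (tree_weight d F) => _ [E [/minF ? ->]] | exists F].
by apply: lb_le_inf => [|_ [E [/minF ? ->]]]; first by exists (tree_weight d F), F.
Qed.

End MinimumSpanningTree.

(** * The entropy bound *)

Section EntropyBound.
Variables (R : realType) (K : finType).
Local Open Scope ring_scope.
Implicit Types (u v : K -> R) (S X Y : {set K}).

Lemma ln_le_subr1 (x : R) : 0 < x -> ln x <= x - 1.
Proof. by move=> x0; have := @le_ln1Dx R (x - 1); rewrite (addrC 1) subrK; apply; lra. Qed.

Lemma lnB_le_divr1 (p q : R) : 0 < p -> 0 < q -> ln p - ln q <= p / q - 1.
Proof. by move=> p0 q0; rewrite -ln_div ?posrE //; apply/ln_le_subr1/divr_gt0. Qed.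

Lemma mul_lnB_le (b W k : R) : 0 <= b -> 0 < W -> 0 < k ->
  b * (ln W - ln b) <= b * ln k + W / k - b.
Proof.
move=> b0 W0 k0; have [->|bn0] := eqVneq b 0.
  by rewrite !mul0r subr0 add0r; apply/ltW/divr_gt0.
have bp : 0 < b by rewrite lt_def bn0.
have := ler_wpM2l b0 (lnB_le_divr1 W0 (mulr_gt0 bp k0)); rewrite lnM ?posrE //.
have -> : b * (W / (b * k) - 1) = W / k - b.
  by field; rewrite (gt_eqF bp) (gt_eqF k0).
lra.
Qed.

(* Gibbs' inequality against the distribution (1/2, 1/4, 1/4). *)
Lemma entropy3_le (a b c : R) : 0 < a -> 0 <= b -> 0 <= c ->
  a * (ln (a + b + c) - ln a) + b * (ln (a + b + c) - ln b) + c * (ln (a + b + c) - ln c)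
  <= (a + 2 * b + 2 * c) * ln 2.
Proof.
move=> a0 b0 c0; have W0 : 0 < a + b + c by lra.
have := mul_lnB_le (ltW a0) W0 (ltr0Sn R 1).
have := mul_lnB_le b0 W0 (ltr0Sn R 3); have := mul_lnB_le c0 W0 (ltr0Sn R 3).
have -> : ln (4 : R) = 2 * ln 2.
  by rewrite [4](_ : _ = 2 * 2 :> R) ?lnM ?posrE //; [ring | lra].
lra.
Qed.

(* The lower bound of the theorem for weights u on S; with W the total weight
   it is W/2 plus W/2 times the binary entropy of u/W ([entropy_boundE]). *)
Definition entropy_bound u S : R :=
  \sum_(x in S) (2^-1 * u x * (1 + log2 ((\sum_(y in S) u y) / u x))).

Lemma ler_sum_term u S x :
  x \in S -> {in S, forall y, 0 <= u y} -> u x <= \sum_(y in S) u y.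
Proof. by move=> xS u0; rewrite (bigD1 x) //= lerDl sumr_ge0 // => y /andP[/u0]. Qed.

Lemma entropy_boundE u S : {in S, forall x, 0 < u x} ->
  entropy_bound u S = 2^-1 * (\sum_(y in S) u y) +
    (\sum_(x in S) u x * (ln (\sum_(y in S) u y) - ln (u x))) / (2 * ln 2).
Proof.
move=> u0; rewrite /entropy_bound mulr_sumr mulr_suml -big_split /=.
apply: eq_bigr => x xS; have ux := u0 x xS.
have U0 : 0 < \sum_(y in S) u y.
  by apply: lt_le_trans ux (ler_sum_term xS _) => y /u0/ltW.
rewrite /log2 ln_div ?posrE //; field.
by apply/lt0r_neq0/ln_gt0; lra.
Qed.

Lemma gibbs_le u v S : {in S, forall x, 0 < u x} -> {in S, forall x, 0 < v x} ->
  \sum_(x in S) u x * (ln (\sum_(y in S) u y) - ln (u x)) <=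
  \sum_(x in S) u x * (ln (\sum_(y in S) v y) - ln (v x)).
Proof.
move=> u0 v0; set U := \sum_(y in S) u y; set V := \sum_(y in S) v y.
have [->|[x0 x0S]] := set_0Vmem S; first by rewrite !big_set0.
have U0 : 0 < U by apply: lt_le_trans (u0 _ x0S) (ler_sum_term x0S _) => y /u0/ltW.
have V0 : 0 < V by apply: lt_le_trans (v0 _ x0S) (ler_sum_term x0S _) => y /v0/ltW.
rewrite -[leRHS]addr0 -[X in _ + X](_ : \sum_(x in S) (U * v x / V - u x) = 0).
  rewrite -big_split ler_sum //= => x xS; have ux := u0 x xS; have vx := v0 x xS.
  have := ler_wpM2l (ltW ux) (lnB_le_divr1 (mulr_gt0 U0 vx) (mulr_gt0 ux V0)).
  rewrite !lnM ?posrE // [_ * (_ / _ - 1)](_ : _ = U * v x / V - u x); first lra.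
  by field; rewrite (gt_eqF ux) (gt_eqF V0).
by rewrite sumrB -mulr_suml -mulr_sumr -/U -/V; field; rewrite gt_eqF.
Qed.

Lemma entropy_bound_le u v S :
  {in S, forall x, 0 < u x <= v x} -> entropy_bound u S <= entropy_bound v S.
Proof.
move=> uv; have u0 x : x \in S -> 0 < u x by case/uv/andP.
have v0 x : x \in S -> 0 < v x by case/uv/andP; apply: lt_le_trans.
rewrite (entropy_boundE u0) (entropy_boundE v0).
have UV : \sum_(y in S) u y <= \sum_(y in S) v y by apply: ler_sum => x /uv/andP[].
have ln2 : 0 < ln (2 : R) by apply: ln_gt0; lra.
apply: lerD; first by rewrite ler_pM2l ?invr_gt0.
rewrite ler_pM2r ?invr_gt0 ?mulr_gt0 //; apply: le_trans (gibbs_le u0 v0) _.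
apply: ler_sum => x xS; apply: ler_wpM2r; last by case/andP: (uv x xS).
by rewrite subr_ge0 ler_ln ?posrE ?v0 ?(lt_le_trans (v0 x xS)) ?ler_sum_term // => y /v0/ltW.
Qed.

Lemma entropy_bound_imset u (s : K -> K) X :
  {in X &, injective s} -> entropy_bound u (s @: X) = entropy_bound (fun x => u (s x)) X.
Proof. by move=> s_inj; rewrite /entropy_bound !big_imset. Qed.

Lemma entropy_bound_split u z X Y :
  {in z |: (X :|: Y), forall x, 0 < u x} -> z \notin X :|: Y -> [disjoint X & Y] ->
  entropy_bound u (z |: (X :|: Y)) <=
    \sum_(x in z |: (X :|: Y)) u x + entropy_bound u X + entropy_bound u Y.
Proof.
move=> u0 zXY disXY.
have uX : {in X, forall x, 0 < u x} by move=> x xX; apply: u0; rewrite !inE xX orbT.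
have uY : {in Y, forall x, 0 < u x} by move=> x xY; apply: u0; rewrite !inE xY !orbT.
have uz : 0 < u z by apply: u0; rewrite !inE eqxx.
have sum_split (g : K -> R) :
    \sum_(x in z |: (X :|: Y)) g x = g z + \sum_(x in X) g x + \sum_(x in Y) g x.
  by rewrite big_setU1 //= -addrA -bigU //; congr (_ + _); apply: eq_bigl => x; rewrite !inE.
rewrite (entropy_boundE u0) (entropy_boundE uX) (entropy_boundE uY) !sum_split.
set a := u z; set b := \sum_(y in X) u y; set c := \sum_(y in Y) u y.
have b0 : 0 <= b by apply: sumr_ge0 => x /uX/ltW.
have c0 : 0 <= c by apply: sumr_ge0 => x /uY/ltW.
(* The grouping property of entropy. *)
have group (Z : {set K}) : \sum_(x in Z) u x * (ln (a + b + c) - ln (u x)) =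
    \sum_(x in Z) u x * (ln (\sum_(y in Z) u y) - ln (u x)) +
    (\sum_(y in Z) u y) * (ln (a + b + c) - ln (\sum_(y in Z) u y)).
  by rewrite mulr_suml -big_split /=; apply: eq_bigr => x _; ring.
rewrite !group -/b -/c.
set QX := \sum_(x in X) _; set QY := \sum_(x in Y) _.
set W := a + b + c.
pose q := a * (ln W - ln a) + b * (ln W - ln b) + c * (ln W - ln c).
have ln2 : 0 < ln (2 : R) by apply: ln_gt0; lra.
have hq : q / (2 * ln 2) <= (a + 2 * b + 2 * c) / 2.
  rewrite ler_pdivrMr ?mulr_gt0 // mulrA divfK ?pnatr_eq0 //; exact: entropy3_le.
have -> : (a * (ln W - ln a) + (QX + b * (ln W - ln b)) + (QY + c * (ln W - ln c))) /
    (2 * ln 2) = q / (2 * ln 2) + QX / (2 * ln 2) + QY / (2 * ln 2).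
  by rewrite /q; field; rewrite gt_eqF.
rewrite /W; lra.
Qed.

End EntropyBound.

(** * Summing over the clusters *)

Section Main.
Variables (R : realType) (T : finType) (d : T -> T -> R).
Hypothesis hd : is_metric d.
Local Open Scope ring_scope.
Local Notation dw := (fun e : T * T => d e.1 e.2).
Implicit Types (A B : {set T}) (E F G : {set T * T}).

Lemma metric_ge0 x y : 0 <= d x y.
Proof.
have [d0 [dC dtri]] := hd; have := dtri x y x.
by rewrite (proj2 (d0 x x) erefl) [d y x]dC; lra.
Qed.

Lemma metric_gt0 x y : x != y -> 0 < d x y.
Proof.
move=> xy; rewrite lt_def metric_ge0 andbT.
by apply: contra_neq xy => /(proj1 hd).
Qed.

Lemma tree_weight_ge0 E : 0 <= tree_weight d E.
Proof. by apply: sumr_ge0 => e _; apply: metric_ge0. Qed.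

Lemma entropy_bound_mst_link A1 A2 F F1 F2 :
  [disjoint A1 & A2] -> A1 != set0 -> A2 != set0 ->
  is_mst d (A1 :|: A2) F -> spanning_tree A1 F1 -> spanning_tree A2 F2 ->
  entropy_bound dw F <= tree_weight d F + entropy_bound dw F1 + entropy_bound dw F2.
Proof.
move=> disA /set0Pn[a1 a1A1] /set0Pn[a2 a2A2] mstF tree1 tree2.
have treeG := spanning_tree_link tree1 tree2 disA a1A1 a2A2.
have [s [s_inj sG s_le]] := mst_matching mstF treeG.
have s_gt0 e : e \in (a1, a2) |: (F1 :|: F2) -> 0 < d (s e).1 (s e).2.
  move=> eG; have seF : s e \in F by rewrite -sG imset_f.
  by have [_ _ /metric_gt0] := (proj1 (proj1 mstF)) (s e) seF.
have s_le_tree (Fi : {set T * T}) e : Fi \subset F1 :|: F2 -> e \in Fi ->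
    0 < d (s e).1 (s e).2 <= d e.1 e.2.
  move=> sub eFi; have eG : e \in (a1, a2) |: (F1 :|: F2).
    by rewrite in_setU1 (subsetP sub e eFi) orbT.
  by rewrite s_gt0 ?s_le.
rewrite -sG entropy_bound_imset //.
apply: le_trans (entropy_bound_split s_gt0 (link_edge_notin tree1 tree2 disA a1A1 a2A2)
  (disjoint_spanning_trees tree1 tree2 disA)) _.
rewrite /tree_weight big_imset //=; apply: lerD; first apply: lerD => //.
  by apply: entropy_bound_le => e; apply: s_le_tree; rewrite subsetUl.
by apply: entropy_bound_le => e; apply: s_le_tree; rewrite subsetUr.
Qed.

Variable C : {set {set T}}.
Hypothesis hC : hierarchical_clustering C.

Definition subcluster_cost A := \sum_(B in C | B \subset A) mst_len d B.

Lemma cluster_mst_len_ge0 B : B \in C -> 0 <= mst_len d B.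
Proof.
move=> BC; have [F mstF] := mst_exists d (cluster_neq0 hC BC).
by rewrite (mst_lenE mstF) tree_weight_ge0.
Qed.

Lemma subcluster_cost_ge0 A : 0 <= subcluster_cost A.
Proof. by apply: sumr_ge0 => B /andP[/cluster_mst_len_ge0]. Qed.

Lemma subcluster_cost_split A A1 A2 :
  A \in C -> A1 != set0 -> A2 != set0 -> [disjoint A1 & A2] -> A1 :|: A2 = A ->
  mst_len d A + subcluster_cost A1 + subcluster_cost A2 <= subcluster_cost A.
Proof.
move=> AC A1n0 A2n0 disA UA.
have sub0 (X : {set T}) : X \subset A1 -> X \subset A2 -> X == set0.
  by move=> X1 X2; rewrite -subset0 -(disjoint_setI0 disA) subsetI X1 X2.
rewrite /subcluster_cost [leRHS](bigD1 A) ?AC ?subxx //= -addrA lerD2l.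
rewrite !big_mkcondr -big_split.
apply: ler_sum => B BC /=; have f0 := cluster_mst_len_ge0 BC.
have [B1|nB1] := boolP (B \subset A1).
  have BA : B \subset A by rewrite -UA (subset_trans B1) ?subsetUl.
  have BnA : B != A.
    apply: contraNneq A2n0 => eBA; apply: sub0 (subset_trans _ B1) (subxx _).
    by rewrite eBA -UA subsetUr.
  have nB2 : ~~ (B \subset A2) by apply: contraNN (cluster_neq0 hC BC); apply: sub0.
  by rewrite BA BnA (negbTE nB2) addr0.
have [B2|nB2] := boolP (B \subset A2); last by rewrite addr0; do !case: ifP.
have BA : B \subset A by rewrite -UA (subset_trans B2) ?subsetUr.
have BnA : B != A.
  apply: contraNneq A1n0 => eBA; apply: sub0 (subxx _) (subset_trans _ B2).
  by rewrite eBA -UA subsetUl.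
by rewrite BA BnA add0r.
Qed.

Lemma entropy_bound_le_subcluster_cost A F :
  A \in C -> is_mst d A F -> entropy_bound dw F <= subcluster_cost A.
Proof.
have [n] := ubnP #|A|; elim: n A F => // n IH A F cardA AC mstF.
have [A_le1|A_gt1] := leqP #|A| 1.
  have : #|F| == 0%N by rewrite (proj1 (proj2 (proj1 mstF))) subn_eq0.
  by rewrite cards_eq0 => /eqP->; rewrite /entropy_bound big_set0 subcluster_cost_ge0.
have [A1 [A2 [A1C A2C disA UA]]] := cluster_split hC AC A_gt1.
have [A1n0 A2n0] := (cluster_neq0 hC A1C, cluster_neq0 hC A2C).
have [F1 mst1] := mst_exists d A1n0; have [F2 mst2] := mst_exists d A2n0.
have cardU : #|A| = (#|A1| + #|A2|)%N.
  by rewrite -UA cardsU (disjoint_setI0 disA) cards0 subn0.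
have A1_gt0 : (0 < #|A1|)%N by rewrite card_gt0.
have A2_gt0 : (0 < #|A2|)%N by rewrite card_gt0.
rewrite -UA in mstF; apply: le_trans (entropy_bound_mst_link disA A1n0 A2n0 mstF
  (proj1 mst1) (proj1 mst2)) _.
apply: le_trans (subcluster_cost_split AC A1n0 A2n0 disA UA).
rewrite -UA (mst_lenE mstF) -!addrA lerD2l.
by apply: lerD; [apply: (IH _ _ _ A1C mst1) | apply: (IH _ _ _ A2C mst2)]; lia.
Qed.

End Main.

Local Open Scope ring_scope.

Theorem lemma7 (R : realType) (T : finType) (d : T -> T -> R)
  (hd : is_metric d) (C : {set {set T}}) (hC : hierarchical_clustering C)
  (E : {set T * T}) (hE : is_mst d [set: T] E) :
  \sum_(e in E) (2^-1 * d e.1 e.2 *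
      (1 + log2 (tree_weight d E / d e.1 e.2)))
  <= \sum_(A in C) mst_len d A.
Proof.
have TC : [set: T] \in C by case: hC.
have -> : \sum_(A in C) mst_len d A = subcluster_cost d C [set: T].
  by apply: eq_bigl => A; rewrite subsetT andbT.
exact: (entropy_bound_le_subcluster_cost hd hC TC hE).
Qed.
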